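(* For $n\geqslant1$ and $m,f\geqslant0$, let $\mathfrak{i}_{n,m,f}$ be the number of inversion sequences $\sigma$ of length $n$ avoiding both $010$ and $210$, with maximum value $m$ and $\mathrm{forb}(\sigma,\{010,210\})=f$. Then for all $n\geqslant 1$, $m\geqslant 1$ and $0\leqslant f\leqslant m+1$, $$\mathfrak{i}_{n,m,f}=\sum_{p=m+1}^{n}\sum_{i=0}^{f-1}\sum_{j=0}^{m-1}\mathfrak{i}_{p-1,j,i}\cdot\mathfrak{h}_{n-p,\,f-i-1},$$ where $\mathfrak{h}_{a,b}$ is the number of words of length $a$ over $\{1,\dots,b\}\sqcup\{\infty\}$ ($\infty$ the largest letter) avoiding $010$ whose subword obtained by deleting the letters $\infty$ is nondecreasing with maximum $b$ (or is empty, when $b=0$); in particular $\mathfrak{h}_{0,0}=1$ and $\mathfrak{h}_{0,b}=0$ for $b\geqslant1$.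
   Context: An inversion sequence of length $n$ is a sequence $(\sigma_1,\dots,\sigma_n)$ of integers with $0\leqslant\sigma_i<i$. A sequence contains a pattern $p$ if some subsequence is order-isomorphic to $p$; otherwise it avoids $p$. Avoiding $010$: no $i<j<l$ with $\sigma_i=\sigma_l<\sigma_j$. Avoiding $210$: no $i<j<l$ with $\sigma_i>\sigma_j>\sigma_l$. For a sequence $\sigma$ avoiding a set of patterns $P$, a value $v\in\{0,\dots,\max(\sigma)\}$ is forbidden if the sequence $\sigma$ followed by $M$ and then $v$ contains some pattern of $P$, where $M>\max(\sigma)$; $\mathrm{forb}(\sigma,P)$ is the number of forbidden values. *)

From mathcomp Require Import all_boot.
Set Implicit Arguments. Unset Strict Implicit. Unset Printing Implicit Defensive.

(* Inversion sequence: position k (0-indexed, i.e. sigma_{k+1}) has value < k+1. *)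
Definition is_invseq (s : seq nat) : bool :=
  [forall k : 'I_(size s), nth 0 s k < k.+1].

Definition contains010 (s : seq nat) : bool :=
  [exists i : 'I_(size s), exists j : 'I_(size s), exists l : 'I_(size s),
     [&& i < j, j < l, nth 0 s i == nth 0 s l & nth 0 s i < nth 0 s j]].

Definition contains210 (s : seq nat) : bool :=
  [exists i : 'I_(size s), exists j : 'I_(size s), exists l : 'I_(size s),
     [&& i < j, j < l, nth 0 s j < nth 0 s i & nth 0 s l < nth 0 s j]].

Definition avoids_P (s : seq nat) : bool := ~~ contains010 s && ~~ contains210 s.

(* maximum value (0 for the empty sequence) *)
Definition seqmax (s : seq nat) : nat := \max_(x <- s) x.

(* forb(s, {010,210}): number of v in {0..max s} such that s M v contains a
   pattern of P, with M := max s + 1 > max s. *)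
Definition forb (s : seq nat) : nat :=
  count (fun v => ~~ avoids_P (s ++ [:: (seqmax s).+1; v])) (iota 0 (seqmax s).+1).

(* i_{n,m,f}: inversion sequences of length n have all values < n, so they
   are exactly the value-sequences of suitable n-tuples over 'I_n. *)
Definition i_count (n m f : nat) : nat :=
  #|[set t : n.-tuple 'I_n |
      [&& is_invseq (map val t), avoids_P (map val t),
          seqmax (map val t) == m & forb (map val t) == f]]|.

(* h_{a,b}: words of length a over {1,...,b} ⊔ {∞}; the letter ∞ is encoded
   as the natural number b+1 (the largest letter), so words are a-tuples of
   values in {1,...,b+1} ⊆ 'I_(b+2). *)
Definition h_count (a b : nat) : nat :=
  #|[set t : a.-tuple 'I_(b.+2) |
      let w := map val t in
      let u := filter (fun x => x <= b) w in
      [&& all (fun x => 0 < x) w, ~~ contains010 w, sorted leq u &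
          ((u != [::]) && (seqmax u == b)) || ((u == [::]) && (b == 0))]]|.

From mathcomp Require Import all_boot.
From Stdlib Require Import Btauto.
From mathcomp Require Import zify.
Set Implicit Arguments. Unset Strict Implicit. Unset Printing Implicit Defensive.

(* Let s be such a sequence with m >= 1 and write s = t ++ m :: w, where m
   occurs for the first time at (0-indexed) position p; the inversion
   condition at that position forces m <= p.  Avoidance of {010, 210} splits:
   s avoids the patterns iff t does, w avoids 010, w contains no pair b, c
   (in this order) with c < b < m, and no letter of w is forbidden after t
   (i.e. lies in t or strictly below the lower end of a descent of t).
   Moreover forb s = forb t + 1 + #{allowed v < m | v <= x < m for some x in w}.
   The values below m which are allowed after t form an increasing list A;
   relabelling its k-th element by k + 1 and m by the letter "infinity" turns
   the admissible suffixes w into exactly the words counted by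
   h_{n-p-1, f - forb t - 1}.  Summing over p, over the prefix t (counted by
   i_{p,j,i} with j < m, i < f) and over w gives the theorem. *)

Fixpoint pairs (Q : nat -> nat -> bool) (s : seq nat) : bool :=
  if s is x :: s' then has (Q x) s' || pairs Q s' else false.

Fixpoint triples (P : nat -> nat -> nat -> bool) (s : seq nat) : bool :=
  if s is x :: s' then pairs (P x) s' || triples P s' else false.

Lemma pairsP (Q : nat -> nat -> bool) s :
  reflect (exists i j, [/\ i < j, j < size s & Q (nth 0 s i) (nth 0 s j)])
          (pairs Q s).
Proof.
elim: s => [|x s IH] /=; first by apply: ReflectF => [[i [j [_ H _]]]].
apply: (iffP orP).
- case=> [/(has_nthP 0) [j Hj HQ]|/IH [i [j [Hij Hj HQ]]]].
  + by exists 0, j.+1.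
  + by exists i.+1, j.+1.
- case=> [[|i] [[|j] [//= Hij Hj HQ]]].
  + by left; apply/(has_nthP 0); exists j.
  + by right; apply/IH; exists i, j.
Qed.

Lemma triplesP (P : nat -> nat -> nat -> bool) s :
  reflect (exists i j l, [/\ i < j, j < l, l < size s &
                   P (nth 0 s i) (nth 0 s j) (nth 0 s l)])
          (triples P s).
Proof.
elim: s => [|x s IH] /=; first by apply: ReflectF => [[i [j [l [_ _ H _]]]]].
apply: (iffP orP).
- case=> [/pairsP [j [l [Hjl Hl HP]]]|/IH [i [j [l [Hij Hjl Hl HP]]]]].
  + by exists 0, j.+1, l.+1.
  + by exists i.+1, j.+1, l.+1.
- case=> [[|i] [[|j] [[|l] [//= Hij Hjl Hl HP]]]].
  + by left; apply/pairsP; exists j, l.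
  + by right; apply/IH; exists i, j, l.
Qed.

Lemma exists3_triples (P : nat -> nat -> nat -> bool) s :
  [exists i : 'I_(size s), exists j : 'I_(size s), exists l : 'I_(size s),
     [&& i < j, j < l & P (nth 0 s i) (nth 0 s j) (nth 0 s l)]] = triples P s.
Proof.
apply/existsP/triplesP.
- case=> i /existsP [j /existsP [l /and3P [H1 H2 H3]]].
  by exists i, j, l; split.
- case=> i [j [l [H1 H2 H3 H4]]].
  have Hj : j < size s by apply: ltn_trans H3.
  have Hi : i < size s by apply: ltn_trans Hj.
  exists (Ordinal Hi); apply/existsP; exists (Ordinal Hj); apply/existsP.
  by exists (Ordinal H3); apply/and3P.
Qed.

Definition pat010 (a b c : nat) : bool := (a == c) && (a < b).
Definition pat210 (a b c : nat) : bool := (b < a) && (c < b).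

Lemma contains010E s : contains010 s = triples pat010 s.
Proof. exact: (exists3_triples pat010 s). Qed.

Lemma contains210E s : contains210 s = triples pat210 s.
Proof. exact: (exists3_triples pat210 s). Qed.

Lemma pairs_cat (Q : nat -> nat -> bool) s1 s2 :
  pairs Q (s1 ++ s2) =
  [|| pairs Q s1, has (fun a => has (Q a) s2) s1 | pairs Q s2].
Proof. by elim: s1 => [|x s1 IH] //=; rewrite has_cat IH; btauto. Qed.

Lemma triples_cat (P : nat -> nat -> nat -> bool) s1 s2 :
  triples P (s1 ++ s2) =
  [|| triples P s1, pairs (fun a b => has (P a b) s2) s1,
      has (fun a => pairs (P a) s2) s1 | triples P s2].
Proof. by elim: s1 => [|x s1 IH] //=; rewrite pairs_cat IH; btauto. Qed.

Lemma eq_in_pairs (Q Q' : nat -> nat -> bool) s :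
  {in s &, Q =2 Q'} -> pairs Q s = pairs Q' s.
Proof.
elim: s => [|x s IH] //= H; congr orb.
  by apply: eq_in_has => y Hy; apply: H; rewrite inE ?Hy ?eqxx ?orbT.
by apply: IH => a b Ha Hb; apply: H; rewrite inE ?Ha ?Hb orbT.
Qed.

Lemma eq_in_triples (P P' : nat -> nat -> nat -> bool) s :
  (forall a b c, a \in s -> b \in s -> c \in s -> P a b c = P' a b c) ->
  triples P s = triples P' s.
Proof.
elim: s => [|x s IH] //= H; congr orb.
  by apply: eq_in_pairs => y z Hy Hz; apply: H; rewrite inE ?Hy ?Hz ?eqxx ?orbT.
by apply: IH => a b c Ha Hb Hc; apply: H; rewrite inE ?Ha ?Hb ?Hc orbT.
Qed.

Lemma pairs_map (Q : nat -> nat -> bool) (g : nat -> nat) s :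
  pairs Q (map g s) = pairs (fun a b => Q (g a) (g b)) s.
Proof. by elim: s => [|x s IH] //=; rewrite has_map IH. Qed.

Lemma triples_map (P : nat -> nat -> nat -> bool) (g : nat -> nat) s :
  triples P (map g s) = triples (fun a b c => P (g a) (g b) (g c)) s.
Proof. by elim: s => [|x s IH] //=; rewrite pairs_map IH. Qed.

Lemma has_swap (R : nat -> nat -> bool) s1 s2 :
  has (fun a => has (R a) s2) s1 = has (fun b => has (R^~ b) s1) s2.
Proof.
apply/hasP/hasP => [[a Ha /hasP [b Hb HR]]|[b Hb /hasP [a Ha HR]]].
  by exists b => //; apply/hasP; exists a.
by exists a => //; apply/hasP; exists b.
Qed.

Lemma pairs_has_swap (R : nat -> nat -> nat -> bool) t w :
  pairs (fun a b => has (R a b) w) t = has (fun c => pairs (fun a b => R a b c) t) w.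
Proof.
elim: t => [|x t IH] /=; first by rewrite has_pred0.
by rewrite IH has_swap -has_predU.
Qed.

(* Splitting avoidance at the first occurrence of the maximum. *)

Definition under_descent (t : seq nat) (c : nat) : bool :=
  pairs (fun a b => (b < a) && (c < b)) t.

(* Appending the letter [c] to [t] creates an occurrence of 010 or 210 whose
   last letter is [c] (when [c] follows a larger letter). *)
Definition forbidden_after (t : seq nat) (c : nat) : bool :=
  (c \in t) || under_descent t c.

Definition descent_below (m b c : nat) : bool := (b < m) && (c < b).

Lemma triples010_split t m w :
  all (fun x => x < m) t -> all (fun x => x <= m) w ->
  triples pat010 (t ++ m :: w) =
  [|| triples pat010 t, triples pat010 w | has (fun c => c \in t) w].
Proof.
move=> /allP Ht /allP Hw; rewrite triples_cat /=.
have -> : pairs (pat010 m) w = false.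
  apply/pairsP => -[i [j [Hij Hj /andP [_ Hm]]]].
  by have := Hw _ (mem_nth 0 (ltn_trans Hij Hj)); rewrite leqNgt Hm.
have -> : has (fun a => pairs (pat010 a) (m :: w)) t = has (fun c => c \in w) t.
  apply: eq_in_has => a Ha /=.
  have -> : has (pat010 a m) w = (a \in w).
    rewrite /pat010 Ht //; apply/hasP/idP => [[c Hc /andP [/eqP -> _]] //|Haw].
    by exists a; rewrite ?eqxx.
  apply/orP/idP => [[//|/pairsP [i [j [Hij Hj /andP [/eqP -> _]]]]]|->]; last by left.
  exact: mem_nth.
have Hrep : pairs (fun a b => has (pat010 a b) (m :: w)) t ->
            has (fun c => c \in w) t.
  move=> /pairsP [i [j [Hij Hj /hasP [c Hc /andP [/eqP Hac _]]]]].
  have Hit : nth 0 t i \in t by apply: mem_nth; apply: ltn_trans Hj.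
  apply/hasP; exists (nth 0 t i) => //.
  move: Hc; rewrite inE -Hac => /orP [/eqP Hm|//].
  by have := Ht _ Hit; rewrite Hm ltnn.
have Hsym : has (fun c => c \in w) t = has (fun c => c \in t) w by exact: has_sym.
rewrite Hsym in Hrep *.
by case: (pairs _ t) Hrep => [->|_] //=; btauto.
Qed.

Lemma triples210_split t m w :
  all (fun x => x < m) t -> all (fun x => x <= m) w ->
  triples pat210 (t ++ m :: w) =
  [|| triples pat210 t, has (under_descent t) w | pairs (descent_below m) w].
Proof.
move=> /allP Ht /allP Hw; rewrite triples_cat /=.
have -> : pairs (fun a b => has (pat210 a b) (m :: w)) t = has (under_descent t) w.
  rewrite -pairs_has_swap; apply: eq_in_pairs => a b Ha Hb /=.
  rewrite /pat210; have := Ht _ Hb.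
  case: (ltnP m b) => [Hmb|_ _]; first by rewrite ltnNge ltnW.
  by rewrite andbF.
have Hfirst : has (fun a => pairs (pat210 a) (m :: w)) t -> pairs (descent_below m) w.
  move=> /hasP [a Ha] /=; rewrite {1}/pat210.
  case/orP => [/hasP [c _ /andP [Hma _]]|/pairsP [i [j [Hij Hj /andP [H1 H2]]]]].
    by move: Hma; rewrite ltnNge ltnW ?Ht.
  by apply/pairsP; exists i, j; split => //; rewrite /descent_below H2 (ltn_trans H1 (Ht _ Ha)).
have Hlast : triples pat210 w -> pairs (descent_below m) w.
  move=> /triplesP [i [j [l [Hij Hjl Hl /andP [H1 H2]]]]].
  apply/pairsP; exists j, l; split => //; rewrite /descent_below H2 andbT.
  apply: (leq_trans H1); apply: Hw; apply: mem_nth.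
  exact: ltn_trans Hij (ltn_trans Hjl Hl).
have -> : pairs (pat210 m) w || triples pat210 w = pairs (descent_below m) w.
  rewrite (_ : pairs (pat210 m) w = pairs (descent_below m) w).
    by case: (triples pat210 w) Hlast => [->|_]; rewrite ?orbT ?orbF.
  by apply: eq_in_pairs => b c Hb Hc; rewrite /pat210 /descent_below.
by case: (has _ t) Hfirst => [->|_] //; rewrite !orbT.
Qed.

Lemma all_not_forbidden_after t w :
  all (fun c => ~~ forbidden_after t c) w =
  ~~ has (fun c => c \in t) w && ~~ has (under_descent t) w.
Proof. by rewrite -negb_or -has_predU -all_predC. Qed.

Lemma avoids_split t m w :
  all (fun x => x < m) t -> all (fun x => x <= m) w ->
  avoids_P (t ++ m :: w) =
  avoids_P t && [&& ~~ triples pat010 w, ~~ pairs (descent_below m) w &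
                    all (fun c => ~~ forbidden_after t c) w].
Proof.
move=> Ht Hw.
rewrite /avoids_P !contains010E !contains210E triples010_split // triples210_split //.
rewrite all_not_forbidden_after; btauto.
Qed.

Lemma seqmax_cons x s : seqmax (x :: s) = maxn x (seqmax s).
Proof. by rewrite /seqmax big_cons. Qed.

Lemma seqmax_le k s : (seqmax s <= k) = all (fun x => x <= k) s.
Proof.
elim: s => [|x s IH]; first by rewrite /seqmax big_nil.
by rewrite seqmax_cons geq_max IH.
Qed.

Lemma mem_le_seqmax x s : x \in s -> x <= seqmax s.
Proof. by move=> Hx; apply: leq_bigmax_seq. Qed.

Lemma seqmax_mem s : 0 < seqmax s -> seqmax s \in s.
Proof.
elim: s => [|y s IH]; first by rewrite /seqmax big_nil.
rewrite seqmax_cons inE; case: (leqP (seqmax s) y) => H; first by rewrite eqxx.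
by move=> /IH ->; rewrite orbT.
Qed.

Lemma all_lt_seqmax m s : 0 < m -> all (fun x => x < m) s = (seqmax s < m).
Proof.
move=> Hm; rewrite -(prednK Hm) ltnS seqmax_le; apply: eq_all => x.
by rewrite -(prednK Hm) ltnS.
Qed.

Lemma seqmax_split t m w : all (fun x => x < m) t -> all (fun x => x <= m) w ->
  seqmax (t ++ m :: w) = m.
Proof.
move=> Ht Hw; apply/eqP; rewrite eqn_leq seqmax_le all_cat /= leqnn Hw.
rewrite mem_le_seqmax ?mem_cat ?inE ?eqxx ?orbT // andbT.
by rewrite !andbT; apply/allP => x /(allP Ht) /ltnW.
Qed.

Lemma forbidden_after_le s v : forbidden_after s v -> v <= seqmax s.
Proof.
case/orP => [/mem_le_seqmax //|/pairsP [i [j [Hij Hj /andP [_ H]]]]].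
by apply: ltnW; apply: (leq_trans H); apply: mem_le_seqmax; exact: mem_nth.
Qed.

Lemma count_iota_ext (p : pred nat) B K : (forall x, p x -> x < B) -> B <= K ->
  count p (iota 0 K) = count p (iota 0 B).
Proof.
move=> Hp HBK; rewrite -(subnKC HBK) iotaD count_cat.
rewrite (@eq_in_count _ p pred0 (iota (0 + B) (K - B))) ?count_pred0 ?addn0 // => x.
by rewrite mem_iota add0n => /andP [Hx _] /=; apply/negP => /Hp; rewrite ltnNge Hx.
Qed.

Lemma forbE s K : avoids_P s -> seqmax s < K ->
  forb s = count (forbidden_after s) (iota 0 K).
Proof.
move=> Hs HK; rewrite (@count_iota_ext _ (seqmax s).+1) //; last first.
  by move=> x /forbidden_after_le.
rewrite /forb; apply: eq_in_count => v; rewrite mem_iota add0n => Hv.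
rewrite avoids_split ?Hs /= ?andbT ?negbK ?(ltnW Hv) //.
by apply/allP => x /mem_le_seqmax.
Qed.

Definition covered (m : nat) (w : seq nat) (v : nat) : bool :=
  has (fun x => (v <= x) && (x < m)) w.

Lemma forbidden_after_split t m w v :
  all (fun x => x < m) t -> all (fun x => x <= m) w -> v <= m ->
  forbidden_after (t ++ m :: w) v =
  [|| forbidden_after t v, v == m | covered m w v].
Proof.
move=> /allP Ht /allP Hw Hvm.
rewrite /forbidden_after /under_descent pairs_cat mem_cat inE /=.
have Hcov x : x \in w -> v <= x < m -> covered m w v.
  by move=> Hx Hvx; apply/hasP; exists x.
apply/idP/idP.
- move=> /orP [/or3P [->|->|Hv]|/orP [->|/orP [H|/orP [H|H]]]]; rewrite ?orbT //.
  + have [_|Hne] := eqVneq v m; first by rewrite orbT.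
    by rewrite (Hcov v) ?orbT // leqnn ltn_neqAle Hne Hvm.
  + case/hasP: H => a Ha /orP [/andP [Hma _]|/hasP [b Hb /andP [Hba Hvb]]].
      by have := Ht _ Ha; rewrite ltnNge (ltnW Hma).
    by rewrite (Hcov b) ?orbT // (ltnW Hvb) (ltn_trans Hba (Ht _ Ha)).
  + case/hasP: H => b Hb /andP [Hbm Hvb].
    by rewrite (Hcov b) ?orbT // (ltnW Hvb).
  + case/pairsP: H => i [j [Hij Hj /andP [Hji Hvj]]].
    rewrite (Hcov (nth 0 w j)) ?orbT ?mem_nth // (ltnW Hvj) /=.
    by apply: (leq_trans Hji); apply: Hw; apply: mem_nth; exact: ltn_trans Hj.
- move=> /or3P [/orP [->|->]|->|/hasP [x Hx /andP [Hvx Hxm]]]; rewrite ?orbT //.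
  case: (ltngtP v x) Hvx => [Hvx _||Heq _]; last by rewrite Heq Hx !orbT.
    suff -> : has (fun b => (b < m) && (v < b)) w by rewrite !orbT.
    by apply/hasP; exists x; rewrite ?Hxm.
  by rewrite ltnNge.
Qed.

Definition allowed (t : seq nat) (m : nat) : seq nat :=
  filter (fun v => ~~ forbidden_after t v) (iota 0 m).

Lemma count_predU_disjoint (a b : pred nat) s :
  count (fun x => a x || b x) s = count a s + count (fun x => ~~ a x && b x) s.
Proof. by elim: s => [|x s IH] //=; rewrite IH; case: (a x); case: (b x) => /=; lia. Qed.

Lemma forb_split t m w : 0 < m ->
  all (fun x => x < m) t -> all (fun x => x <= m) w ->
  avoids_P t -> avoids_P (t ++ m :: w) ->
  forb (t ++ m :: w) = forb t + 1 + count (covered m w) (allowed t m).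
Proof.
move=> Hm Ht Hw Hat Has.
rewrite (@forbE _ m.+1) ?seqmax_split // -addn1 iotaD count_cat /= add0n.
have -> : forbidden_after (t ++ m :: w) m by rewrite /forbidden_after mem_cat inE eqxx orbT.
rewrite (@eq_in_count _ _ (fun v => forbidden_after t v || covered m w v)); last first.
  move=> v; rewrite mem_iota add0n => Hv.
  by rewrite forbidden_after_split // ?(ltnW Hv) // (ltn_eqF Hv).
rewrite count_predU_disjoint (@forbE t m) -?all_lt_seqmax // /allowed count_filter addn0 addnAC.
by congr (_ + _ + _); apply: eq_count => x /=; rewrite andbC.
Qed.

Fixpoint invf (k : nat) (s : seq nat) : bool :=
  if s is x :: s' then (x <= k) && invf k.+1 s' else true.

Lemma invfP k s : reflect (forall i, i < size s -> nth 0 s i <= k + i) (invf k s).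
Proof.
elim: s k => [|x s IH] k /=; first by apply: ReflectT.
apply: (iffP andP) => [[Hx /IH H] [|i] //=|H]; first by rewrite addn0.
  by move=> Hi; rewrite addnS -addSn; apply: H.
split; first by have := H 0 isT; rewrite addn0.
by apply/IH => i Hi; rewrite addSn -addnS; exact: (H i.+1).
Qed.

Lemma invseqE s : is_invseq s = invf 0 s.
Proof.
apply/forallP/invfP => [H i Hi|H i]; first by have := H (Ordinal Hi).
by rewrite ltnS; apply: H.
Qed.

Lemma invf_cat k s1 s2 : invf k (s1 ++ s2) = invf k s1 && invf (k + size s1) s2.
Proof.
elim: s1 k => [|x s1 IH] k /=; first by rewrite addn0.
by rewrite IH addSnnS andbA.
Qed.

Lemma invf_all k s : all (fun x => x <= k) s -> invf k s.
Proof.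
elim: s k => [|x s IH] k //= /andP [-> H] /=; apply: IH.
by apply/allP => y Hy; apply: leqW; exact: (allP H).
Qed.

Lemma invf_bound k s : invf k s -> all (fun x => x < k + size s) s.
Proof.
elim: s k => [|x s IH] k //= /andP [Hx /IH H]; apply/andP; split.
  by rewrite addnS ltnS (leq_trans Hx) ?leq_addr.
by rewrite addnS -addSn.
Qed.

Lemma invseq_index s x : is_invseq s -> x \in s -> x <= index x s.
Proof.
rewrite invseqE => /invfP Hs Hx.
by have := Hs (index x s); rewrite index_mem nth_index // => /(_ Hx).
Qed.

Lemma countE (T : Type) (P : pred T) s : count P s = \sum_(x <- s) (P x : nat).
Proof. by rewrite -sum1_count big_mkcond. Qed.

Fixpoint words (k N : nat) : seq (seq nat) :=
  if k is k'.+1 then [seq x :: s | x <- iota 0 N, s <- words k' N] else [:: [::]].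

Lemma mem_words k N s : (s \in words k N) = (size s == k) && all (fun x => x < N) s.
Proof.
elim: k s => [|k IH] [|x s] //=; first by apply/allpairsP => -[[y t] /= [_ _ H]].
apply/allpairsP/idP => [[[y t] /= [Hy Ht [-> ->]]]|/andP [Hs /andP [Hx Ha]]].
  by move: Hy Ht; rewrite mem_iota add0n IH /= eqSS => -> /andP [-> ->].
exists (x, s); split => //=; first by rewrite mem_iota add0n.
by rewrite IH -eqSS Hs.
Qed.

Lemma uniq_words k N : uniq (words k N).
Proof.
elim: k => [|k IH] //=; apply: allpairs_uniq => //; first exact: iota_uniq.
by move=> [x s] [y t] _ _ /= [-> ->].
Qed.

Lemma sum_words_cons k N (F : seq nat -> nat) :
  \sum_(s <- words k.+1 N) F s = \sum_(x <- iota 0 N) \sum_(s <- words k N) F (x :: s).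
Proof. by rewrite /= big_allpairs_dep. Qed.

Lemma sum_words_cat a c N (F : seq nat -> nat) :
  \sum_(s <- words (a + c) N) F s =
  \sum_(s1 <- words a N) \sum_(s2 <- words c N) F (s1 ++ s2).
Proof.
elim: a F => [|a IH] F; first by rewrite /= big_seq1.
by rewrite addSn !sum_words_cons; apply: eq_bigr => x _; rewrite IH.
Qed.

Lemma count_bij (T1 T2 : eqType) (L1 : seq T1) (L2 : seq T2) (P1 : pred T1)
  (P2 : pred T2) (g : T2 -> T1) :
  uniq L1 -> uniq L2 ->
  (forall x, x \in L2 -> P2 x -> g x \in L1 /\ P1 (g x)) ->
  (forall y, y \in L1 -> P1 y -> exists2 x, (x \in L2) && P2 x & g x = y) ->
  (forall x1 x2, x1 \in L2 -> P2 x1 -> x2 \in L2 -> P2 x2 -> g x1 = g x2 -> x1 = x2) ->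
  count P1 L1 = count P2 L2.
Proof.
move=> U1 U2 Hf Hb Hi; rewrite -!size_filter -(size_map g).
apply: perm_size; apply: uniq_perm.
- exact: filter_uniq.
- rewrite map_inj_in_uniq ?filter_uniq // => x1 x2.
  by rewrite !mem_filter => /andP [H1 H1'] /andP [H2 H2']; exact: Hi.
- move=> y; rewrite mem_filter; apply/andP/mapP => [[Hy Hy']|[x Hx ->]].
    by case: (Hb y Hy' Hy) => x Hx <-; exists x => //; rewrite mem_filter andbC.
  by move: Hx; rewrite mem_filter => /andP [H1 H2]; case: (Hf x H2 H1) => -> ->.
Qed.

Lemma count_words_widen k N N' (P : pred (seq nat)) : N <= N' ->
  (forall s, size s = k -> P s -> all (fun x => x < N) s) ->
  count P (words k N) = count P (words k N').
Proof.
move=> HN HP; apply: (@count_bij _ _ _ _ _ _ id); rewrite ?uniq_words //.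
- move=> s; rewrite !mem_words => /andP [Hs Ha] Ps; split => //.
  by rewrite Hs (HP s (eqP Hs) Ps).
- move=> s; rewrite mem_words => /andP [Hs Ha] Ps; exists s => //.
  rewrite mem_words Hs Ps /= andbT; apply/allP => x Hx.
  by apply: (leq_trans _ HN); exact: (allP Ha).
Qed.

Lemma card_set_count (T : finType) (p : pred T) : #|[set x | p x]| = count p (enum T).
Proof.
rewrite cardsE cardE -size_filter /enum_mem size_filter.
by rewrite /enum_mem (@eq_filter _ (mem T) predT) // filter_predT size_filter.
Qed.

Lemma val_pmap_insub N (s : seq nat) : all (fun x => x < N) s ->
  map val (pmap (insub : nat -> option 'I_N) s) = s.
Proof. by elim: s => [|x s IH] //= /andP [Hx Hs]; rewrite insubT /= IH. Qed.

Lemma card_words k N (P : pred (seq nat)) :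
  #|[set t : k.-tuple 'I_N | P (map val t)]| = count P (words k N).
Proof.
rewrite card_set_count; symmetry.
apply: (@count_bij _ _ _ _ _ _ (fun t : k.-tuple 'I_N => map val (tval t))).
- exact: uniq_words.
- exact: enum_uniq.
- move=> t _ Ht; split => //; rewrite mem_words size_map size_tuple eqxx /=.
  by apply/allP => x /mapP [i _ ->].
- move=> y; rewrite mem_words => /andP [/eqP Hy Ha] Py.
  have Hs : size (pmap (insub : nat -> option 'I_N) y) == k.
    by rewrite size_pmap_sub (eq_in_count (a2 := predT)) ?count_predT ?Hy // => x /(allP Ha).
  exists (Tuple Hs); first by rewrite mem_enum /= val_pmap_insub.
  by rewrite /= val_pmap_insub.
- by move=> x1 x2 _ _ _ _ /(inj_map val_inj) H; exact: val_inj.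
Qed.

(* The relabelling bijection for suffixes. *)

Definition hcond (b : nat) (w : seq nat) : bool :=
  let u := filter (fun x => x <= b) w in
  [&& all (fun x => 0 < x) w, ~~ contains010 w, sorted leq u &
      ((u != [::]) && (seqmax u == b)) || ((u == [::]) && (b == 0))].

Lemma h_countE a b : h_count a b = count (hcond b) (words a b.+2).
Proof. exact: (card_words a b.+2 (hcond b)). Qed.

(* The admissible suffixes [w] after the prefix [t] and the maximum [m] of a
   sequence counted by i_{_, m, f}, cf. [avoids_split] and [forb_split]. *)
Definition suffix_ok (t : seq nat) (m f : nat) (w : seq nat) : bool :=
  [&& all (fun x => x <= m) w, ~~ triples pat010 w, ~~ pairs (descent_below m) w,
      all (fun c => ~~ forbidden_after t c) w &
      forb t + 1 + count (covered m w) (allowed t m) == f].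

Lemma count_lt_iota M K : M <= K -> count (fun s => s < M) (iota 0 K) = M.
Proof.
move=> HMK; rewrite (count_iota_ext (B := M)) //.
by rewrite (eq_in_count (a2 := predT)) ?count_predT ?size_iota // => x; rewrite mem_iota.
Qed.

Lemma sorted_filter_pairs b u : sorted leq (filter (fun x => x <= b) u) =
  ~~ pairs (fun x y => (x <= b) && (y < x)) u.
Proof.
rewrite sorted_pairwise; last exact: leq_trans.
elim: u => [|x u IH] //=; case: ifP => Hx /=; rewrite IH ?negb_or; last first.
  by rewrite (@eq_has _ _ pred0) ?has_pred0 // => y /=; rewrite Hx.
congr andb; rewrite all_filter -all_predC; apply: eq_all => y /=.
case: (leqP y b) => Hy /=; first by rewrite -leqNgt.
by rewrite -leqNgt ltnW // (leq_ltn_trans Hx Hy).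
Qed.

Section Relabel.

Variables (t : seq nat) (m f : nat).
Hypotheses (Hm : 0 < m) (Ht : all (fun x => x < m) t) (Hat : avoids_P t)
  (Hif : forb t < f) (Hfm : f <= m.+1).

Local Notation A := (allowed t m).
(* The largest finite letter of the corresponding h-words. *)
Local Notation b := (f - forb t - 1).

Lemma seqmax_prefix : seqmax t < m.
Proof. by rewrite -all_lt_seqmax. Qed.

Lemma size_allowed : size A = m - forb t.
Proof.
have Hsplit := count_predC (forbidden_after t) (iota 0 m).
rewrite size_iota -(forbE Hat seqmax_prefix) in Hsplit.
by rewrite /allowed size_filter -{2}Hsplit addKn.
Qed.

Lemma b_le_size_allowed : b <= size A.
Proof. by rewrite size_allowed; lia. Qed.

Lemma sorted_allowed : sorted ltn A.
Proof. by apply: sorted_filter; [exact: ltn_trans | exact: iota_ltn_sorted]. Qed.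

Lemma mem_allowed x : (x \in A) = (x < m) && ~~ forbidden_after t x.
Proof. by rewrite mem_filter mem_iota add0n andbC. Qed.

Lemma nth_allowed_lt i j : i < size A -> j < size A ->
  (nth 0 A i < nth 0 A j) = (i < j).
Proof.
move=> Hi Hj; case: (ltngtP i j) => H.
- exact: (sorted_ltn_nth ltn_trans 0 sorted_allowed).
- apply/negbTE; rewrite -leqNgt; apply: ltnW.
  exact: (sorted_ltn_nth ltn_trans 0 sorted_allowed).
- by rewrite H ltnn.
Qed.

Lemma nth_allowed i : i < size A ->
  nth 0 A i < m /\ ~~ forbidden_after t (nth 0 A i).
Proof. by move=> Hi; have := mem_nth 0 Hi; rewrite mem_allowed => /andP []. Qed.

Definition in_alphabet (k : nat) : bool := (0 < k) && (k <= b.+1).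

Definition label (k : nat) : nat := if k <= b then nth 0 A k.-1 else m.

Lemma label_lt k l : in_alphabet k -> in_alphabet l -> (label k < label l) = (k < l).
Proof.
case: k => [|k] //; case: l => [|l] // /andP [_ Hk] /andP [_ Hl]; rewrite /label.
have Hb := b_le_size_allowed.
case: (leqP k.+1 b) => Hkb; case: (leqP l.+1 b) => Hlb.
- by rewrite nth_allowed_lt ?ltnS //; lia.
- have [-> _] := nth_allowed (leq_trans Hkb Hb); apply/esym; lia.
- have [H _] := nth_allowed (leq_trans Hlb Hb).
  by rewrite ltnNge ltnW //; apply/esym/negbTE; lia.
- have -> : k = l by lia.
  by rewrite !ltnn.
Qed.

Lemma label_eq k l : in_alphabet k -> in_alphabet l -> (label k == label l) = (k == l).
Proof.
move=> Hk Hl; rewrite eqn_leq [label k <= _]leqNgt [label l <= _]leqNgt !label_lt //.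
by rewrite -!leqNgt -eqn_leq.
Qed.

Lemma label_lt_m k : in_alphabet k -> (label k < m) = (k <= b).
Proof.
move=> /andP [Hk0 Hk]; rewrite /label; case: (leqP k b) => Hkb; last by rewrite ltnn.
have Hs : k.-1 < size A by have := b_le_size_allowed; lia.
by have [-> _] := nth_allowed Hs.
Qed.

Lemma label_le_m k : label k <= m.
Proof.
rewrite /label; case: (leqP k b) => Hkb //.
case: (ltnP k.-1 (size A)) => H; first by have [/ltnW] := nth_allowed H.
by rewrite nth_default.
Qed.

Lemma label_not_forbidden k : in_alphabet k -> ~~ forbidden_after t (label k).
Proof.
move=> /andP [Hk0 Hk]; rewrite /label; case: (leqP k b) => Hkb.
  have Hs : k.-1 < size A by have := b_le_size_allowed; lia.
  by have [] := nth_allowed Hs.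
by apply/negP => /forbidden_after_le; rewrite leqNgt seqmax_prefix.
Qed.

(* The largest finite letter of a word (0 if there is none). *)
Definition finite_max (u : seq nat) : nat := \max_(x <- u | x <= b) x.

Lemma finite_max_le u : finite_max u <= b.
Proof. by apply/bigmax_leqP_seq => i _. Qed.

Lemma lt_finite_max s u : (s < finite_max u) = has (fun k => (s < k) && (k <= b)) u.
Proof.
elim: u => [|x u IH]; first by rewrite /finite_max big_nil.
rewrite /finite_max big_cons /= -/(finite_max u) -IH.
by case: (leqP x b) => Hx; rewrite ?leq_max ?andbT ?andbF.
Qed.

Lemma allowedE : A = map (nth 0 A) (iota 0 (size A)).
Proof. by rewrite map_nth_iota0 // take_size. Qed.

(* The relabelled suffix covers exactly the first [finite_max u] allowed
   values, so the forb condition becomes "the finite maximum is b". *)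
Lemma count_covered_label u : all in_alphabet u ->
  count (covered m (map label u)) A = finite_max u.
Proof.
move=> /allP Hu.
rewrite {1}allowedE count_map -(@count_lt_iota (finite_max u) (size A)); last first.
  exact: leq_trans (finite_max_le u) b_le_size_allowed.
apply: eq_in_count => s; rewrite mem_iota add0n => /= Hs.
rewrite lt_finite_max /covered has_map; apply: eq_in_has => k /Hu Hk /=.
rewrite label_lt_m //; case: (leqP k b) => Hkb; rewrite ?andbT ?andbF //.
move: Hk => /andP [Hk0 _]; have Hb := b_le_size_allowed.
by rewrite /label Hkb leqNgt nth_allowed_lt; lia.
Qed.

Lemma hcond_label u : all in_alphabet u -> hcond b u = suffix_ok t m f (map label u).
Proof.
move=> Hu.
have Hle : all (fun x => x <= m) (map label u).
  by rewrite all_map; apply/allP => k _; exact: label_le_m.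
have Hnf : all (fun c => ~~ forbidden_after t c) (map label u).
  by rewrite all_map; apply/allP => k Hk; exact: label_not_forbidden (allP Hu k Hk).
have H010 : triples pat010 (map label u) = triples pat010 u.
  rewrite triples_map; apply: eq_in_triples => x y z Hx Hy Hz.
  by rewrite /pat010 label_eq ?label_lt //; apply: (allP Hu).
have Hdesc : pairs (descent_below m) (map label u) =
             pairs (fun x y => (x <= b) && (y < x)) u.
  rewrite pairs_map; apply: eq_in_pairs => x y Hx Hy.
  by rewrite /descent_below label_lt_m ?label_lt //; apply: (allP Hu).
have Hforb : (forb t + 1 + count (covered m (map label u)) A == f) =
             (finite_max u == b).
  by rewrite count_covered_label //; apply/eqP/eqP; lia.
have Hpos : all (fun x => 0 < x) u.
  by apply/allP => x Hx; have /andP [] := allP Hu x Hx.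
rewrite /hcond /suffix_ok Hle Hnf H010 Hdesc Hforb Hpos contains010E.
rewrite sorted_filter_pairs /seqmax big_filter -/(finite_max u) /=.
congr [&& _, _ & _]; case: eqP => [Hnil|_] /=; last by rewrite orbF.
by rewrite /finite_max -big_filter Hnil big_nil eq_sym.
Qed.

Definition unlabel (x : nat) : nat := if x == m then b.+1 else (index x A).+1.

Lemma unlabel_label k : in_alphabet k -> unlabel (label k) = k.
Proof.
move=> /andP [Hk0 Hk]; rewrite /unlabel /label.
case: (leqP k b) => Hkb; last by rewrite eqxx; lia.
have Hs : k.-1 < size A by have := b_le_size_allowed; lia.
have [Hm' _] := nth_allowed Hs.
rewrite (ltn_eqF Hm') index_uniq //; first by lia.
by apply: sorted_uniq sorted_allowed; [exact: ltn_trans | exact: ltnn].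
Qed.

Lemma suffix_ok_lt_m w x : suffix_ok t m f w -> x \in w -> x != m -> x < m.
Proof. by case/and5P => /allP Hw _ _ _ _ Hx Hne; rewrite ltn_neqAle Hne Hw. Qed.

Lemma suffix_ok_allowed w x : suffix_ok t m f w -> x \in w -> x != m -> x \in A.
Proof.
move=> Hw Hx Hne; rewrite mem_allowed (suffix_ok_lt_m Hw Hx Hne) /=.
by case/and5P: Hw => _ _ _ /allP H _; exact: H.
Qed.

Lemma index_allowed_lt w x : suffix_ok t m f w -> x \in w -> x != m -> index x A < b.
Proof.
move=> Hw Hx Hne.
have HxA := suffix_ok_allowed Hw Hx Hne.
have Hidx : index x A < size A by rewrite index_mem.
have Hcount : count (covered m w) A = b by case/and5P: Hw => _ _ _ _ /eqP; lia.
rewrite -Hcount [X in count _ X]allowedE count_map.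
apply: leq_trans (_ : count (fun s => s < (index x A).+1) (iota 0 (size A)) <= _).
  by rewrite count_lt_iota.
apply: sub_count => s /= Hs; apply/hasP; exists x => //.
rewrite (suffix_ok_lt_m Hw Hx Hne) andbT -(nth_index 0 HxA).
case: (ltngtP s (index x A)) Hs => [H _|H|->] //; last by rewrite ltnS leqNgt H.
by rewrite ltnW // nth_allowed_lt //; exact: ltn_trans H Hidx.
Qed.

Lemma label_unlabel w x : suffix_ok t m f w -> x \in w -> label (unlabel x) = x.
Proof.
move=> Hw Hx; rewrite /unlabel; case: eqP => [->|/eqP Hne]; first by rewrite /label ltnn.
by rewrite /label (index_allowed_lt Hw Hx Hne) nth_index ?(suffix_ok_allowed Hw Hx Hne).
Qed.

Lemma unlabel_in_alphabet w x : suffix_ok t m f w -> x \in w -> in_alphabet (unlabel x).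
Proof.
move=> Hw Hx; rewrite /in_alphabet /unlabel; case: eqP => [_|/eqP Hne] //=.
by rewrite ltnS ltnW ?(index_allowed_lt Hw Hx Hne).
Qed.

Lemma count_suffix_ok c N : m < N -> count (suffix_ok t m f) (words c N) = h_count c b.
Proof.
move=> HN; rewrite h_countE.
have Halph u : u \in words c b.+2 -> hcond b u -> all in_alphabet u.
  move=> /[!mem_words] /andP [_ /allP Hl] /and4P [/allP Hp _ _ _].
  by apply/allP => x Hx; rewrite /in_alphabet Hp //= -ltnS Hl.
have Hinv w : suffix_ok t m f w -> map label (map unlabel w) = w.
  by move=> Hw; rewrite -map_comp; apply: map_id_in => x; exact: label_unlabel.
have Hinv' u : all in_alphabet u -> map unlabel (map label u) = u.
  by move=> /allP Hu; rewrite -map_comp; apply: map_id_in => k /Hu /unlabel_label.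
apply: (@count_bij _ _ _ _ _ _ (map label)); rewrite ?uniq_words //.
- move=> u Hu Hh; split; last by rewrite -hcond_label ?Halph.
  move: Hu; rewrite !mem_words size_map => /andP [-> _] /=.
  by rewrite all_map; apply/allP => k _ /=; apply: leq_ltn_trans (label_le_m k) HN.
- move=> w Hw Hok; exists (map unlabel w); last exact: Hinv.
  have Hal : all in_alphabet (map unlabel w).
    by rewrite all_map; apply/allP => x Hx; exact: unlabel_in_alphabet Hok Hx.
  rewrite hcond_label // Hinv // Hok andbT.
  move: Hw; rewrite !mem_words size_map => /andP [-> _] /=.
  by apply/allP => x /(allP Hal) /andP [_]; rewrite ltnS.
- move=> u1 u2 H1 P1 H2 P2 E.
  by rewrite -(Hinv' _ (Halph _ H1 P1)) E Hinv' ?Halph.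
Qed.

End Relabel.

Definition icond (m f : nat) (s : seq nat) : bool :=
  [&& is_invseq s, avoids_P s, seqmax s == m & forb s == f].

(* The prefixes before a first maximum [m]: their length is at least [m]
   because of the inversion condition at the position of [m]. *)
Definition prefix_ok (m : nat) (t : seq nat) : bool :=
  [&& is_invseq t, avoids_P t, all (fun x => x < m) t & m <= size t].

Lemma i_countE n m f : i_count n m f = count (icond m f) (words n n).
Proof. exact: (card_words n n (icond m f)). Qed.

Lemma icond_bounded m f t w : m \notin t -> icond m f (t ++ m :: w) ->
  all (fun x => x < m) t /\ all (fun x => x <= m) w.
Proof.
move=> Hnt /and4P [_ _ /eqP Hmax _].
move: (leqnn m); rewrite -{1}Hmax seqmax_le all_cat /= => /and3P [Ht _ Hw].
split=> //; apply/allP => x Hx; rewrite ltn_neqAle (allP Ht x Hx) andbT.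
by apply: contraNneq Hnt => <-.
Qed.

Lemma icond_split_bounded m f t w : 0 < m ->
  all (fun x => x < m) t -> all (fun x => x <= m) w ->
  icond m f (t ++ m :: w) = prefix_ok m t && suffix_ok t m f w.
Proof.
move=> Hm Ht Hw; have Hsplit := avoids_split Ht Hw.
rewrite /icond /prefix_ok /suffix_ok !invseqE invf_cat /= add0n Ht Hw.
rewrite seqmax_split // eqxx.
case Hms: (m <= size t); last by rewrite !andbF.
rewrite (@invf_all _ w); last by apply/allP => x /(allP Hw) /leq_trans; apply; exact: leqW.
case Has: (avoids_P (t ++ m :: w)).
  move: (Has); rewrite Hsplit => /andP [Ha /and3P [-> -> ->]].
  by rewrite (forb_split Hm Ht Hw Ha Has) Ha !andbT.
rewrite /= andbF; apply/esym/negP => /and5P [/and3P [_ Ha _] H1 H2 H3 _].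
by rewrite Hsplit Ha H1 H2 H3 in Has.
Qed.

Lemma icond_split m f t w : 0 < m -> m \notin t ->
  icond m f (t ++ m :: w) = prefix_ok m t && suffix_ok t m f w.
Proof.
move=> Hm Hnt.
case Hb: (all (fun x => x < m) t && all (fun x => x <= m) w).
  by case/andP: Hb => Ht Hw; exact: icond_split_bounded.
apply/idP/idP => [/(icond_bounded Hnt) [Ht Hw]|/andP [/and4P [_ _ Ht _] /and5P [Hw _ _ _ _]]].
  by rewrite Ht Hw in Hb.
by rewrite Ht Hw in Hb.
Qed.

Lemma sum_nat_pick K a (F : nat -> nat) :
  \sum_(0 <= i < K) ((a == i) * F i) = (a < K) * F a.
Proof.
elim: K => [|K IH]; first by rewrite big_geq.
have E : (a < K.+1) = (a < K) || (a == K) by rewrite ltnS leq_eqVlt orbC.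
rewrite big_nat_recr //= IH E.
by case: (ltngtP a K) => H /=; rewrite ?mul1n ?mul0n ?addn0 ?add0n // H.
Qed.

Definition suffix_count (f c i : nat) : nat := if i < f then h_count c (f - i - 1) else 0.

Lemma index_first_max (m x : nat) (t w : seq nat) :
  (index m (t ++ x :: w) == size t) = (m \notin t) && (x == m).
Proof.
rewrite index_cat; case Hmt: (m \in t) => /=.
  by apply/negbTE; rewrite neq_ltn index_mem Hmt.
by rewrite -{2}(addn0 (size t)) eqn_add2l; case: (x == m).
Qed.

Lemma sum_suffixes m f n c t : 0 < m -> m < n -> f <= m.+1 ->
  \sum_(w <- words c n) ((m \notin t) && icond m f (t ++ m :: w) : nat) =
  prefix_ok m t * suffix_count f c (forb t).
Proof.
move=> Hm Hmn Hf.
case Hmt: (m \in t) => /=.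
  rewrite big1 // /prefix_ok.
  suff -> : all (fun x => x < m) t = false by rewrite !andbF.
  by apply/negbTE/negP => /allP /(_ m Hmt); rewrite ltnn.
under eq_bigr do rewrite icond_split ?Hmt // -mulnb.
rewrite -big_distrr /= -countE.
case Hpre: (prefix_ok m t); rewrite ?mul0n ?mul1n //.
move: Hpre => /and4P [_ Hat Ht _].
rewrite /suffix_count; case: ltnP => Hif; first exact: count_suffix_ok.
rewrite (eq_in_count (a2 := pred0)) ?count_pred0 // => w _ /=.
by apply/negP => /and5P [_ _ _ _ /eqP Hfe]; move: Hif; rewrite -Hfe; lia.
Qed.

Lemma sum_first_max_after m f n c t : 0 < m -> m < n -> f <= m.+1 ->
  \sum_(s2 <- words c.+1 n) (icond m f (t ++ s2) && (index m (t ++ s2) == size t) : nat) =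
  prefix_ok m t * suffix_count f c (forb t).
Proof.
move=> Hm Hmn Hf.
rewrite sum_words_cons -(sum_suffixes c t Hm Hmn Hf).
have Hterm x w : (icond m f (t ++ x :: w) && (index m (t ++ x :: w) == size t) : nat) =
                 (m == x) * ((m \notin t) && icond m f (t ++ m :: w)).
  rewrite index_first_max; have [->|Hne] := eqVneq x m; first by rewrite andbT andbC mul1n.
  by rewrite !andbF.
under eq_bigr do under eq_bigr do rewrite Hterm.
under eq_bigr do rewrite -big_distrr /=.
by rewrite -{1}(subn0 n) -/(index_iota 0 n) sum_nat_pick Hmn mul1n.
Qed.

Lemma prefix_ok_decomp m f c t : 0 < m -> m <= size t ->
  prefix_ok m t * suffix_count f c (forb t) =
  \sum_(0 <= i < f) \sum_(0 <= j < m) icond j i t * h_count c (f - i - 1).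
Proof.
move=> Hm Hsize.
set B := is_invseq t && avoids_P t.
have Hj i : \sum_(0 <= j < m) icond j i t * h_count c (f - i - 1) =
            (seqmax t < m) * ((B && (forb t == i)) * h_count c (f - i - 1)).
  rewrite -(sum_nat_pick m (seqmax t) (fun=> (B && (forb t == i)) * h_count c (f - i - 1))).
  apply: eq_bigr => j _.
  rewrite /icond /B mulnA mulnb; congr (_ * _); congr nat_of_bool; btauto.
under eq_bigr do rewrite Hj.
rewrite -big_distrr /=.
have -> : \sum_(0 <= i < f) ((B && (forb t == i)) * h_count c (f - i - 1)) =
          B * ((forb t < f) * h_count c (f - forb t - 1)).
  rewrite -(sum_nat_pick f (forb t) (fun i => h_count c (f - i - 1))) big_distrr /=.
  by apply: eq_bigr => i _; rewrite mulnA -mulnb.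
rewrite /prefix_ok /suffix_count all_lt_seqmax // Hsize /B andbT.
case: (forb t < f); rewrite ?muln0 // ?mul1n mulnA mulnb; congr (nat_of_bool _ * _); btauto.
Qed.

Definition first_max_count (n m f p : nat) : nat :=
  \sum_(s <- words n n) (icond m f s && (index m s == p) : nat).

(* Every counted sequence contains its maximum m >= 1, at some position < n. *)
Lemma i_count_first_max n m f : 0 < m ->
  i_count n m f = \sum_(0 <= p < n) first_max_count n m f p.
Proof.
move=> Hm; rewrite i_countE countE /first_max_count exchange_big /=.
apply: eq_big_seq => s /[!mem_words] /andP [/eqP Hs _].
rewrite (eq_bigr (fun p => (index m s == p) * 1 * icond m f s)) => [|p _]; last first.
  by rewrite muln1 mulnb andbC.
rewrite -big_distrl /= (sum_nat_pick n (index m s) (fun=> 1)) muln1.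
case Hc: (icond m f s); rewrite ?muln0 // muln1.
move: Hc => /and4P [_ _ /eqP Hmax _].
by rewrite -Hs index_mem -Hmax seqmax_mem ?Hmax.
Qed.

Lemma first_max_count_small n m f p : 0 < m -> p < m -> first_max_count n m f p = 0.
Proof.
move=> Hm Hpm; apply: big1 => s _; apply/eqP; rewrite eqb0 negb_and.
case Hc: (icond m f s) => //=; move: Hc => /and4P [Hinv _ /eqP Hmax _].
have Hms : m \in s by rewrite -Hmax seqmax_mem ?Hmax.
by apply/eqP => Hidx; have := invseq_index Hinv Hms; rewrite Hidx leqNgt Hpm.
Qed.

Lemma first_max_count_eq n m f p : 0 < m -> f <= m.+1 -> m <= p -> p < n ->
  first_max_count n m f p =
  \sum_(0 <= i < f) \sum_(0 <= j < m) i_count p j i * h_count (n - p - 1) (f - i - 1).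
Proof.
move=> Hm Hf Hmp Hpn; rewrite /first_max_count.
have -> : words n n = words (p + (n - p - 1).+1) n by congr words; lia.
rewrite sum_words_cat.
rewrite (eq_big_seq (fun t => \sum_(0 <= i < f) \sum_(0 <= j < m)
           icond j i t * h_count (n - p - 1) (f - i - 1))); last first.
  move=> t /[!mem_words] /andP [/eqP Ht _].
  rewrite -{2}Ht sum_first_max_after ?prefix_ok_decomp ?Ht //; lia.
rewrite exchange_big; apply: eq_bigr => i _; rewrite exchange_big.
apply: eq_bigr => j _; rewrite -big_distrl /= -countE i_countE.
congr (_ * _); symmetry; apply: count_words_widen; first exact: ltnW.
by move=> s Hs /and4P [+ _ _ _]; rewrite invseqE => /invf_bound; rewrite Hs.
Qed.

Unset Implicit Arguments.

Theorem mainTheorem10 (n m f : nat) :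
  1 <= n -> 1 <= m -> f <= m.+1 ->
  i_count n m f =
  \sum_(m.+1 <= p < n.+1) \sum_(0 <= i < f) \sum_(0 <= j < m)
     i_count (p - 1) j i * h_count (n - p) (f - i - 1).
Proof.
move=> _ Hm Hf; rewrite (i_count_first_max n f Hm).
have Hsmall k : k <= m -> \sum_(0 <= p < k) first_max_count n m f p = 0.
  by move=> Hk; rewrite big_nat big1 // => p /andP [_ Hp]; apply: first_max_count_small; lia.
have [Hnm|Hmn] := leqP n m.
  by rewrite Hsmall // big_geq // ltnS.
have -> : \sum_(0 <= p < n) first_max_count n m f p =
          \sum_(m <= p < n) first_max_count n m f p.
  by rewrite (@big_cat_nat _ _ _ m) ?(ltnW Hmn) //= Hsmall.
rewrite -[m.+1]addn1 -[n.+1]addn1 big_addn addnK.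
apply: eq_big_nat => p /andP [Hmp Hpn].
by rewrite first_max_count_eq // addnK subnDA.
Qed.
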